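(* For every $n\ge1$, the set of integer posets on $[n]$, ordered by the weak order on integer relations, is a lattice.
   Context: An integer relation of size $n$ is a reflexive binary relation $R$ on $[n]=\{1,\dots,n\}$. Its increasing part is $\mathrm{Inc}(R)=\{(a,b)\in R: a<b\}$ and its decreasing part is $\mathrm{Dec}(R)=\{(b,a)\in R: a<b\}$. The weak order on integer relations: $R\le S$ iff $\mathrm{Inc}(S)\subseteq\mathrm{Inc}(R)$ and $\mathrm{Dec}(R)\subseteq\mathrm{Dec}(S)$. An integer poset is an integer relation that is antisymmetric and transitive. *)

From mathcomp Require Import all_boot all_order.
Set Implicit Arguments. Unset Strict Implicit. Unset Printing Implicit Defensive.

(* The ground set [n] = {1,...,n} is modelled by 'I_n = {0,...,n-1}
   (order-preserving shift by one). An integer relation is a finite set of pairs. *)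

Definition int_rel (n : nat) := {set 'I_n * 'I_n}.

Definition reflexive_rel n (R : int_rel n) : bool := [forall i, (i, i) \in R].

Definition Inc n (R : int_rel n) : {set 'I_n * 'I_n} :=
  [set p in R | (p.1 < p.2)%N].
Definition Dec n (R : int_rel n) : {set 'I_n * 'I_n} :=
  [set p in R | (p.2 < p.1)%N].

Definition is_int_rel n (R : int_rel n) : bool := reflexive_rel R.

Definition antisym_rel n (R : int_rel n) : bool :=
  [forall a, forall b, ((a, b) \in R) && ((b, a) \in R) ==> (a == b)].
Definition trans_rel n (R : int_rel n) : bool :=
  [forall a, forall b, forall c, ((a, b) \in R) && ((b, c) \in R) ==> ((a, c) \in R)].

Definition int_poset n (R : int_rel n) : bool :=
  [&& is_int_rel R, antisym_rel R & trans_rel R].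

Definition weak_le n (R S : int_rel n) : bool :=
  (Inc S \subset Inc R) && (Dec R \subset Dec S).

Definition is_join n (P Q J : int_rel n) : Prop :=
  [/\ int_poset J, weak_le P J, weak_le Q J &
      forall K, int_poset K -> weak_le P K -> weak_le Q K -> weak_le J K].
Definition is_meet n (P Q M : int_rel n) : Prop :=
  [/\ int_poset M, weak_le M P, weak_le M Q &
      forall K, int_poset K -> weak_le K P -> weak_le K Q -> weak_le K M].

Definition int_posets_lattice (n : nat) : Prop :=
  forall P Q : int_rel n, int_poset P -> int_poset Q ->
    (exists J, is_join P Q J) /\ (exists M, is_meet P Q M).

(* The meet of two integer posets P and Q is the reflexive-transitive closure
   of Inc(P) u Inc(Q), together with the largest set D of decreasing pairs
   common to P and Q that is compatible with this closure: composing a pair of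
   D with increasing pairs on either side lands again in D or in the closure.
   D is the greatest fixed point of a monotone operator on sets of pairs, so it
   contains the decreasing part of every lower bound, and it is transitive by
   coinduction, because composites of two admissible pairs are admissible.
   Taking converses reverses the weak order, so joins are converses of meets. *)

From mathcomp Require Import all_boot all_order.
Set Implicit Arguments. Unset Strict Implicit. Unset Printing Implicit Defensive.

Lemma sub_cofixset (T : finType) (F : {set T} -> {set T}) (X : {set T}) :
  {homo F : A B / A \subset B} -> X \subset F X -> X \subset cofixset F.
Proof.
move=> F_mono XFX; rewrite /cofixset subsetC /fixset.
elim: #|T| => [|k IHk] /=; first exact: sub0set.
by rewrite /funsetC subCset setCK (subset_trans XFX) // F_mono // subsetC.
Qed.

Lemma connect_ind_head (T : finType) (e : rel T) (y : T) (Pr : T -> Prop) :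
  Pr y -> (forall x z, e x z -> connect e z y -> Pr z -> Pr x) ->
  forall x, connect e x y -> Pr x.
Proof.
move=> Py step x /connectP [p]; elim: p x => [|z p IHp] x /=; first by move=> _ <-.
move=> /andP [exz zp] yE; apply: step exz _ (IHp z zp yE).
by apply/connectP; exists p.
Qed.

Section IntegerPosets.
Variable n : nat.
Local Notation T := 'I_n.
Implicit Types (P Q K R S : int_rel n) (a b c x y z : T).

Record is_poset R : Prop := IsPoset {
  poset_refl : forall a, (a, a) \in R;
  poset_antisym : forall a b, (a, b) \in R -> (b, a) \in R -> a = b;
  poset_trans : forall a b c, (a, b) \in R -> (b, c) \in R -> (a, c) \in R }.

Lemma int_posetP R : reflect (is_poset R) (int_poset R).
Proof.
apply: (iffP and3P) => [[/forallP refl /forallP anti /forallP tr] | [refl anti tr]].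
- split=> [a | a b ab ba | a b c ab bc]; first exact: refl.
  + by apply/eqP; move: (anti a) => /forallP/(_ b)/implyP; apply; rewrite ab ba.
  + by move: (tr a) => /forallP/(_ b)/forallP/(_ c)/implyP; apply; rewrite ab bc.
- split; apply/forallP => a; first exact: refl.
  + by apply/forallP => b; apply/implyP => /andP [ab ba]; rewrite (anti a b).
  + by do 2![apply/forallP => ?]; apply/implyP => /andP [ab bc]; exact: tr ab bc.
Qed.

Lemma weak_le_inc R S a b : weak_le R S -> a < b -> (a, b) \in S -> (a, b) \in R.
Proof.
case/andP => /subsetP IncSR _ ab abS.
by have := IncSR (a, b); rewrite !inE abS ab => /(_ isT) /andP [].
Qed.

Lemma weak_le_dec R S a b : weak_le R S -> b < a -> (a, b) \in R -> (a, b) \in S.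
Proof.
case/andP => _ /subsetP DecRS ba abR.
by have := DecRS (a, b); rewrite !inE abR ba => /(_ isT) /andP [].
Qed.

Lemma weak_leI R S :
  (forall a b, a < b -> (a, b) \in S -> (a, b) \in R) ->
  (forall a b, b < a -> (a, b) \in R -> (a, b) \in S) -> weak_le R S.
Proof.
move=> IncSR DecRS; apply/andP; split; apply/subsetP => -[a b];
  rewrite !inE /= => /andP [Rab lt]; rewrite lt andbT; [exact: IncSR | exact: DecRS].
Qed.

Section Meet.
Variables P Q : int_rel n.
Hypotheses (posP : is_poset P) (posQ : is_poset Q).

Definition inc_step : rel T := [rel x y | (x, y) \in Inc P :|: Inc Q].
Local Notation inc_cl := (connect inc_step).

Lemma inc_step_lt x y : inc_step x y -> x < y.
Proof. by rewrite /inc_step /= !inE /= => /orP [] /andP []. Qed.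

Lemma inc_cl_leq x y : inc_cl x y -> x <= y.
Proof.
move: x; apply: connect_ind_head => // x z /inc_step_lt xz _ zy.
exact: ltnW (leq_trans xz zy).
Qed.

Lemma inc_step_dec_r x z a : inc_step x z -> (z, a) \in P -> (z, a) \in Q ->
  x < a -> inc_step x a.
Proof.
rewrite /inc_step /= !inE /= => /orP [] /andP [xz _] zaP zaQ xa.
- by rewrite (poset_trans posP xz zaP) xa.
- by rewrite (poset_trans posQ xz zaQ) xa orbT.
Qed.

Lemma inc_step_dec_l b a y : (b, a) \in P -> (b, a) \in Q -> inc_step a y ->
  b < y -> inc_step b y.
Proof.
rewrite /inc_step /= !inE /= => baP baQ /orP [] /andP [ay _] bY.
- by rewrite (poset_trans posP baP ay) bY.
- by rewrite (poset_trans posQ baQ ay) bY orbT.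
Qed.

Record admissible (E : {set T * T}) b a : Prop := Admissible {
  adm_lt : a < b;
  adm_P : (b, a) \in P;
  adm_Q : (b, a) \in Q;
  adm_ninc : ~~ inc_cl a b;
  adm_src : forall x, a < x -> inc_cl x b -> (x, a) \in E;
  adm_tgt : forall y, y < b -> inc_cl a y -> (b, y) \in E;
  adm_below : forall x, x < a -> inc_cl x b -> inc_cl x a;
  adm_above : forall y, b < y -> inc_cl a y -> inc_cl b y }.

Definition dec_admissible (E : {set T * T}) : {set T * T} :=
  [set p : T * T | [&& p.2 < p.1, p \in P, p \in Q, ~~ inc_cl p.2 p.1,
    [forall x : T, (p.2 < x) && inc_cl x p.1 ==> ((x, p.2) \in E)],
    [forall y : T, (y < p.1) && inc_cl p.2 y ==> ((p.1, y) \in E)],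
    [forall x : T, (x < p.2) && inc_cl x p.1 ==> inc_cl x p.2] &
    [forall y : T, (p.1 < y) && inc_cl p.2 y ==> inc_cl p.1 y]]].

Lemma dec_admissibleP E b a : reflect (admissible E b a) ((b, a) \in dec_admissible E).
Proof.
rewrite inE /=; apply: (iffP idP).
- case/and4P=> ab baP baQ /and4P [ninc /forallP src /forallP tgt].
  case/andP=> /forallP lo /forallP hi.
  split=> // [x ax xb | y yb ay | x xa xb | y bY ay].
  + by move/implyP: (src x); apply; rewrite ax.
  + by move/implyP: (tgt y); apply; rewrite yb.
  + by move/implyP: (lo x); apply; rewrite xa.
  + by move/implyP: (hi y); apply; rewrite bY.
- case=> -> -> -> -> src tgt lo hi /=.
  by apply/and4P; split; apply/forallP => ?; apply/implyP => /andP [];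
    [exact: src | exact: tgt | exact: lo | exact: hi].
Qed.

Lemma dec_admissible_mono : {homo dec_admissible : E E' / E \subset E'}.
Proof.
move=> E E' /subsetP EE'; apply/subsetP => -[b a] /dec_admissibleP [] *.
by apply/dec_admissibleP; split=> // *; apply: EE'; auto.
Qed.

Section Below.
Variable K : int_rel n.
Hypotheses (posK : is_poset K) (KP : weak_le K P) (KQ : weak_le K Q).

Lemma inc_cl_sub x y : inc_cl x y -> (x, y) \in K.
Proof.
move: x; apply: connect_ind_head => [|x z xz _ zy]; first exact: poset_refl.
apply: poset_trans posK _ _ _ _ zy; have lt := inc_step_lt xz.
by move: xz; rewrite /inc_step /= !inE /= => /orP [] /andP [xz _];
  [exact: weak_le_inc KP lt xz | exact: weak_le_inc KQ lt xz].
Qed.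

Lemma inc_cl_dec_tgt b a : (b, a) \in K -> a < b ->
  forall x, inc_cl x b -> x < a -> inc_cl x a.
Proof.
move=> ba ab; apply: connect_ind_head => [|x z xz zb IH] xa.
  by have := ltn_trans xa ab; rewrite ltnn.
case: (ltngtP z a) => [za | az | /val_inj <-]; last exact: connect1.
- exact: connect_trans (connect1 xz) (IH za).
- have za : (z, a) \in K := poset_trans posK (inc_cl_sub zb) ba.
  by apply/connect1/(inc_step_dec_r xz _ _ xa);
    [exact: weak_le_dec KP az za | exact: weak_le_dec KQ az za].
Qed.

Lemma inc_cl_dec_src y a : inc_cl a y ->
  forall b, (b, a) \in K -> a < b -> b < y -> inc_cl b y.
Proof.
move: a; apply: connect_ind_head => [|a z az zy IH] b ba ab bY.
  by have := ltn_trans ab bY; rewrite ltnn.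
case: (ltngtP z b) => [zb | bz | /val_inj <-] //.
- exact: IH (poset_trans posK ba (inc_cl_sub (connect1 az))) zb bY.
- apply: connect_trans (connect1 _) zy; apply: inc_step_dec_l az bz;
    [exact: weak_le_dec KP ab ba | exact: weak_le_dec KQ ab ba].
Qed.

Lemma Dec_sub_dec_admissible : Dec K \subset dec_admissible (Dec K).
Proof.
apply/subsetP => -[b a]; rewrite inE /= => /andP [ba ab]; apply/dec_admissibleP.
split=> //.
- exact: weak_le_dec KP ab ba.
- exact: weak_le_dec KQ ab ba.
- apply/negP => /inc_cl_sub ab'.
  by move: ab; rewrite (poset_antisym posK ab' ba) ltnn.
- by move=> x ax xb; rewrite inE (poset_trans posK (inc_cl_sub xb) ba) ax.
- by move=> y yb ay; rewrite inE (poset_trans posK ba (inc_cl_sub ay)) yb.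
- by move=> x xa xb; exact: (inc_cl_dec_tgt ba ab xb xa).
- by move=> y bY ay; exact: (inc_cl_dec_src ay ba ab bY).
Qed.
End Below.

Definition meet_dec : {set T * T} := cofixset dec_admissible.

Lemma meet_decP b a : (b, a) \in meet_dec -> admissible meet_dec b a.
Proof.
by rewrite /meet_dec -{1}(cofixsetK dec_admissible_mono) => /dec_admissibleP.
Qed.

Definition comp2 (E : {set T * T}) : {set T * T} :=
  [set p : T * T | [exists m : T, ((p.1, m) \in E) && ((m, p.2) \in E)]].

Lemma comp2P (E : {set T * T}) x y :
  reflect (exists2 m, (x, m) \in E & (m, y) \in E) ((x, y) \in comp2 E).
Proof.
rewrite inE; apply: (iffP existsP) => [[m /andP [xm my]] | [m xm my]];
  by exists m; rewrite ?xm.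
Qed.

Lemma admissible_comp2 (E : {set T * T}) c b a :
  (c, b) \in E -> (b, a) \in E -> admissible E c b -> admissible E b a ->
  admissible (E :|: comp2 E) c a.
Proof.
move=> cb ba [ltcb Pcb Qcb _ src1 tgt1 lo1 hi1] [ltba Pba Qba nIab src2 tgt2 lo2 hi2].
have inE1 p : p \in E -> p \in E :|: comp2 E by rewrite inE => ->.
have inE2 x m y : (x, m) \in E -> (m, y) \in E -> (x, y) \in E :|: comp2 E.
  by move=> xm my; apply/setUP; right; apply/comp2P; exists m.
split.
- exact: ltn_trans ltba ltcb.
- exact: (poset_trans posP Pcb Pba).
- exact: (poset_trans posQ Qcb Qba).
- by apply: contra nIab => Iac; exact: lo1 ltba Iac.
- move=> x ax xc; case: (ltngtP x b) => [xb | bx | /val_inj ->]; last exact: inE1.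
  + exact/inE1/src2/lo1.
  + exact: inE2 (src1 _ bx xc) ba.
- move=> y yc ay; case: (ltngtP y b) => [yb | by_ | /val_inj ->]; last exact: inE1.
  + exact: inE2 cb (tgt2 _ yb ay).
  + exact/inE1/tgt1/hi2.
- by move=> x xa xc; apply: lo2 xa (lo1 _ (ltn_trans xa ltba) xc).
- by move=> y cy ay; apply: hi1 cy (hi2 _ (ltn_trans ltcb cy) ay).
Qed.

Lemma meet_dec_trans c b a :
  (c, b) \in meet_dec -> (b, a) \in meet_dec -> (c, a) \in meet_dec.
Proof.
move=> cb ba; suff /subsetP: meet_dec :|: comp2 meet_dec \subset meet_dec.
  by apply; apply/setUP; right; apply/comp2P; exists b.
apply/sub_cofixset; first exact: dec_admissible_mono.
apply/subsetP => -[x y] /setUP [xy | /comp2P [m xm my]].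
- apply: (subsetP (dec_admissible_mono (subsetUl _ _))).
  exact/dec_admissibleP/meet_decP.
- exact/dec_admissibleP/(admissible_comp2 xm my (meet_decP xm) (meet_decP my)).
Qed.

Definition meet_rel : int_rel n :=
  [set p : T * T | inc_cl p.1 p.2 || (p \in meet_dec)].

Lemma meet_relE a b : ((a, b) \in meet_rel) = inc_cl a b || ((a, b) \in meet_dec).
Proof. exact: in_set. Qed.

Lemma meet_rel_dec a b : b < a -> (a, b) \in meet_rel -> admissible meet_dec a b.
Proof.
move=> ba; rewrite meet_relE => /orP [/inc_cl_leq ab | /meet_decP //].
by have := leq_ltn_trans ab ba; rewrite ltnn.
Qed.

Lemma meet_rel_poset : is_poset meet_rel.
Proof.
split=> [a | a b | a b c]; first by rewrite meet_relE connect0.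
- rewrite !meet_relE => /orP [Iab | /meet_decP Dab] /orP [Iba | /meet_decP Dba].
  + by apply/val_inj/anti_leq; rewrite !inc_cl_leq.
  + by move: (adm_ninc Dba); rewrite Iab.
  + by move: (adm_ninc Dab); rewrite Iba.
  + by have := ltn_trans (adm_lt Dab) (adm_lt Dba); rewrite ltnn.
rewrite !meet_relE => /orP [Iab | Dab] /orP [Ibc | Dbc].
- by rewrite (connect_trans Iab Ibc).
- have G := meet_decP Dbc; case: (ltngtP a c) => [ac | ca | /val_inj ->].
  + by rewrite (adm_below G ac Iab).
  + by rewrite (adm_src G ca Iab) orbT.
  + by rewrite connect0.
- have G := meet_decP Dab; case: (ltngtP c a) => [ca | ac | /val_inj ->].
  + by rewrite (adm_tgt G ca Ibc) orbT.
  + by rewrite (adm_above G ac Ibc).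
  + by rewrite connect0.
- by rewrite (meet_dec_trans Dab Dbc) orbT.
Qed.

Lemma meet_rel_inc a b : a < b -> (a, b) \in P :|: Q -> (a, b) \in meet_rel.
Proof.
move=> ab PQab; rewrite meet_relE (@connect1 _ inc_step) //.
by move: PQab; rewrite /inc_step /= !inE ab !andbT.
Qed.

Lemma Dec_sub_meet_dec K :
  is_poset K -> weak_le K P -> weak_le K Q -> Dec K \subset meet_dec.
Proof.
by move=> posK KP KQ; apply: sub_cofixset dec_admissible_mono _;
  exact: Dec_sub_dec_admissible.
Qed.

Lemma meet_rel_le_l : weak_le meet_rel P.
Proof.
apply: weak_leI => [a b ab abP | a b ba /(meet_rel_dec ba) /adm_P //].
by rewrite meet_rel_inc // inE abP.
Qed.

Lemma meet_rel_le_r : weak_le meet_rel Q.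
Proof.
apply: weak_leI => [a b ab abQ | a b ba /(meet_rel_dec ba) /adm_Q //].
by rewrite meet_rel_inc // inE abQ orbT.
Qed.

Lemma meet_rel_greatest K :
  is_poset K -> weak_le K P -> weak_le K Q -> weak_le K meet_rel.
Proof.
move=> posK KP KQ; apply: weak_leI => [a b ab | a b ba abK].
- rewrite meet_relE => /orP [/(inc_cl_sub posK KP KQ) // | /meet_decP /adm_lt ba].
  by have := ltn_trans ab ba; rewrite ltnn.
have /subsetP/(_ (a, b)) := Dec_sub_meet_dec posK KP KQ.
by rewrite meet_relE inE abK ba orbC => ->.
Qed.

Lemma meet_exists : exists M, is_meet P Q M.
Proof.
exists meet_rel; split; [exact/int_posetP/meet_rel_poset | exact: meet_rel_le_l |
  exact: meet_rel_le_r | move=> K /int_posetP; exact: meet_rel_greatest].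
Qed.
End Meet.

Definition converse R : int_rel n := [set p : T * T | (p.2, p.1) \in R].

Lemma converseK : involutive converse.
Proof. by move=> R; apply/setP => -[a b]; rewrite !inE. Qed.

Lemma converse_poset R : is_poset R -> is_poset (converse R).
Proof.
case=> refl anti tr; split=> [a | a b | a b c]; rewrite ?inE //=.
- by move=> ba ab; rewrite (anti b a).
- by move=> ba cb; exact: tr cb ba.
Qed.

Lemma int_poset_converse R : int_poset R -> int_poset (converse R).
Proof. by move/int_posetP/converse_poset/int_posetP. Qed.

Lemma weak_le_converse R S : weak_le R S -> weak_le (converse S) (converse R).
Proof.
move=> RS; apply: weak_leI => a b lt; rewrite !inE /=;
  [exact: weak_le_dec RS lt | exact: weak_le_inc RS lt].
Qed.

Lemma join_exists P Q : int_poset P -> int_poset Q -> exists J, is_join P Q J.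
Proof.
move=> /int_poset_converse /int_posetP posP /int_poset_converse /int_posetP posQ.
have [M [posM MP MQ Mgreatest]] := meet_exists posP posQ.
exists (converse M); split.
- exact: int_poset_converse.
- by rewrite -[P]converseK; exact: weak_le_converse.
- by rewrite -[Q]converseK; exact: weak_le_converse.
move=> K posK PK QK; rewrite -[K]converseK; apply: weak_le_converse.
by apply: Mgreatest; [exact: int_poset_converse | exact: weak_le_converse..].
Qed.
End IntegerPosets.

Theorem theorem1 (n : nat) : (1 <= n)%N -> int_posets_lattice n.
Proof.
move=> _ P Q posP posQ; split; first exact: join_exists.
exact: meet_exists (int_posetP _ posP) (int_posetP _ posQ).
Qed.
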